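(* Consider the control setting described in the context, and let $M_1, M_2, \dots$ be generated by the FTRL Controller (FTRL-C) with $\sigma = \frac{\sqrt{\delta^2+2lz}}{\sqrt{2}\,\kappa_M\delta}$, where $z = p\,w\sqrt{d_u}\,\kappa_B$. Assume $h_1>0$. Then for every horizon $T\ge 1$, $$\mathcal{R}_T \le \frac{2\kappa_M}{\delta}\Big(\sqrt{2(\delta^2+2lz)}+\frac{lz}{\delta\sqrt{h_1}}\Big)\sqrt{\sum_{t=1}^T \max_{s\le t} g_s}.$$
   Context: System: $\mathbf{x}_{t+1}=A\mathbf{x}_t+B\mathbf{u}_t+\mathbf{w}_t$ for $t=1,2,\dots$, with $\mathbf{x}_t\in\mathbb{R}^{d_x}$, $\mathbf{u}_t\in\mathbb{R}^{d_u}$, $\mathbf{x}_1=0$, and disturbances $\mathbf{w}_t$ chosen arbitrarily (adversarially) subject to $\|\mathbf{w}_t\|\le w$; set $\mathbf{w}_t=0$ for $t\le 0$. The disturbance $\mathbf{w}_t$ and the cost $c_t$ are revealed after $\mathbf{u}_t$ is chosen. The spectral norm of $A$ equals $1-\delta$ with $0<\delta<1$, and $\|B\|\le\kappa_B$. Norms are Euclidean for vectors and Frobenius for matrices; $\langle X,Y\rangle=\sum_{ij}X^{(i,j)}Y^{(i,j)}$; $h_{a:b}=\sum_{s=a}^b h_s$. Policy class (disturbance-action controllers with memory $p\ge1$): a parameter is $M=[M^{[1]}|\cdots|M^{[p]}]$ with $M^{[j]}\in\mathbb{R}^{d_u\times d_x}$, restricted to $\mathcal{M}=\{M:\sum_{j=1}^p\|M^{[j]}\|\le\kappa_M\}$.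 Using parameter $M_t$ at step $t$ means playing $\mathbf{u}_t=\sum_{j=1}^p M_t^{[j]}\mathbf{w}_{t-j}$. The actual states/actions under the sequence $M_1,M_2,\dots$ are denoted $\mathbf{x}_t,\mathbf{u}_t$; for a fixed $M\in\mathcal{M}$, $\mathbf{x}_t(M),\mathbf{u}_t(M)$ denote the state and action at step $t$ had $M$ been used at every step $1,\dots,t$ (same disturbances). Costs $c_t:\mathbb{R}^{d_x}\times\mathbb{R}^{d_u}\to\mathbb{R}$ are convex and $l$-Lipschitz. Let $f_t(M)=c_t(\mathbf{x}_t(M),\mathbf{u}_t(M))$ (convex in $M$) and $G_t=\nabla f_t(M_t)$ (a (sub)gradient with respect to $M$), $g_t=\max(\|G_t\|,\|G_t\|^2)$. FTRL-C: $M_1\in\mathcal{M}$ arbitrary; for $t\ge1$, $M_{t+1}=\arg\min_{M\in\mathcal{M}}\sum_{s=1}^t\big(f_s(M)+r_s(M)\big)$ with $r_s(M)=\frac{\sigma_s}{2}\|M-M_s\|^2$, $\sigma_1=\sigma\sqrt{h_1}$, $\sigma_t=\sigma(\sqrt{h_{1:t}}-\sqrt{h_{1:t-1}})$ for $t\ge2$, and $h_t=\max_{s\le t}g_s$. Policy regret: $\mathcal{R}_T=\sum_{t=1}^T c_t(\mathbf{x}_t,\mathbf{u}_t)-\sum_{t=1}^T c_t(\mathbf{x}_t(M_\star),\mathbf{u}_t(M_\star))$, where $M_\star\in\arg\min_{M\in\mathcal{M}}\sum_{t=1}^T f_t(M)$. *)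

From HB Require Import structures.
From mathcomp Require Import all_boot all_order all_algebra.
From mathcomp Require Import reals.
Set Implicit Arguments. Unset Strict Implicit. Unset Printing Implicit Defensive.
Import Order.TTheory GRing.Theory Num.Theory.
Local Open Scope ring_scope.

Section LDS.
Variable R : realType.

Definition frob (m n : nat) (X : 'M[R]_(m, n)) : R :=
  Num.sqrt (\sum_(i < m) \sum_(j < n) X i j ^+ 2).

Definition spectral_norm_eq (n : nat) (A : 'M[R]_n) (c : R) : Prop :=
  (forall x : 'cV[R]_n, frob (A *m x) <= c * frob x) /\
  (forall c', (forall x : 'cV[R]_n, frob (A *m x) <= c' * frob x) -> c <= c').

(* A DAC parameter M = [M^[1] | ... | M^[p]]; block M^[j] is stored at index j-1. *)
Definition param (p du dx : nat) := {ffun 'I_p -> 'M[R]_(du, dx)}.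

Definition pip (p du dx : nat) (M N : param p du dx) : R :=
  \sum_(k < p) \sum_(i < du) \sum_(j < dx) M k i j * N k i j.
Definition pnorm (p du dx : nat) (M : param p du dx) : R := Num.sqrt (pip M M).

Definition in_class (p du dx : nat) (kM : R) (M : param p du dx) : Prop :=
  \sum_(k < p) frob (M k) <= kM.

(* u_t = sum_{j=1}^p M^[j] w_{t-j}; with w_0 = 0 assumed, the truncated
   subtraction t - j = 0 for j >= t encodes w_s = 0 for s <= 0. *)
Definition dac (p du dx : nat) (M : param p du dx) (w : nat -> 'cV[R]_dx) (t : nat)
  : 'cV[R]_du := \sum_(k < p) M k *m w (t - k.+1)%N.

(* state n = x_{n+1}:  x_1 = 0,  x_{t+1} = A x_t + B u_t + w_t. *)
Fixpoint state (dx du : nat) (A : 'M[R]_dx) (B : 'M[R]_(dx, du))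
  (w : nat -> 'cV[R]_dx) (u : nat -> 'cV[R]_du) (n : nat) : 'cV[R]_dx :=
  match n with
  | 0 => 0
  | n'.+1 => A *m state A B w u n' + B *m u n'.+1 + w n'.+1
  end.

Definition xst (dx du : nat) (A : 'M[R]_dx) (B : 'M[R]_(dx, du))
  (w : nat -> 'cV[R]_dx) (u : nat -> 'cV[R]_du) (t : nat) : 'cV[R]_dx :=
  state A B w u t.-1.

Definition fcost (p dx du : nat) (A : 'M[R]_dx) (B : 'M[R]_(dx, du))
  (w : nat -> 'cV[R]_dx) (c : nat -> 'cV[R]_dx -> 'cV[R]_du -> R)
  (t : nat) (M : param p du dx) : R :=
  c t (xst A B w (dac M w) t) (dac M w t).

Definition acost (p dx du : nat) (A : 'M[R]_dx) (B : 'M[R]_(dx, du))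
  (w : nat -> 'cV[R]_dx) (c : nat -> 'cV[R]_dx -> 'cV[R]_du -> R)
  (Ms : nat -> param p du dx) (t : nat) : R :=
  let u := fun s => dac (Ms s) w s in c t (xst A B w u t) (u t).

Definition convex_cost (dx du : nat) (ct : 'cV[R]_dx -> 'cV[R]_du -> R) : Prop :=
  forall (x y : 'cV[R]_dx) (u v : 'cV[R]_du) (lam : R), 0 <= lam <= 1 ->
    ct (lam *: x + (1 - lam) *: y) (lam *: u + (1 - lam) *: v)
      <= lam * ct x u + (1 - lam) * ct y v.

Definition lipschitz_cost (dx du : nat) (l : R) (ct : 'cV[R]_dx -> 'cV[R]_du -> R)
  : Prop :=
  forall (x y : 'cV[R]_dx) (u v : 'cV[R]_du),
    `|ct x u - ct y v| <= l * Num.sqrt (frob (x - y) ^+ 2 + frob (u - v) ^+ 2).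

Definition subgrad (p du dx : nat) (f : param p du dx -> R) (M G : param p du dx)
  : Prop := forall N, f M + pip G (N - M) <= f N.

Definition gg (p du dx : nat) (G : nat -> param p du dx) (t : nat) : R :=
  Num.max (pnorm (G t)) (pnorm (G t) ^+ 2).

(* h_t = max_{1 <= s <= t} g_s  (the g_s are >= 0) *)
Definition hh (p du dx : nat) (G : nat -> param p du dx) (t : nat) : R :=
  \big[Num.max/0]_(1 <= s < t.+1) gg G s.

Definition hsum (p du dx : nat) (G : nat -> param p du dx) (t : nat) : R :=
  \sum_(1 <= s < t.+1) hh G s.

Definition sig (p du dx : nat) (sigma : R) (G : nat -> param p du dx) (t : nat) : R :=
  if t == 1%N then sigma * Num.sqrt (hh G 1)
  else sigma * (Num.sqrt (hsum G t) - Num.sqrt (hsum G t.-1)).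

Definition ftrl_obj (p du dx : nat) (f : nat -> param p du dx -> R) (sigma : R)
  (G : nat -> param p du dx) (Ms : nat -> param p du dx) (t : nat)
  (M : param p du dx) : R :=
  \sum_(1 <= s < t.+1) (f s M + sig sigma G s / 2 * pnorm (M - Ms s) ^+ 2).

End LDS.

(* The regret splits into two parts.  First, f_t is convex in M because the state is
   affine in the DAC parameter, and the actual state x_t differs from the counterfactual
   x_t(M_t) only through the movement of the iterates: since A contracts by 1 - delta and
   x_t(M) is (z / delta)-Lipschitz in M, the tracking error obeys
   e_(t+1) <= (1 - delta) e_t + (z / delta) |M_t - M_(t+1)|, so the cost mismatch is at
   most (l z / delta^2) sum_t |M_t - M_(t+1)|.  Second, the FTRL objective after t rounds
   is sigma sqrt(h_(1:t))-strongly convex, so consecutive minimisers move by at most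
   |G_t| / (sigma sqrt(h_(1:t))) and the telescoped regret on the f_t is at most
   sum_t |G_t|^2 / (2 sigma sqrt(h_(1:t))) + 2 kM^2 sigma sqrt(h_(1:T)); both sums are
   controlled by sum_t h_t / sqrt(h_(1:t)) <= 2 sqrt(h_(1:T)).  Altogether the regret is
   at most ((2 l z / delta^2 + 1) / sigma + 2 kM^2 sigma) sqrt(h_(1:T)), and the chosen
   sigma balances the two terms; the summand l z / (delta sqrt h_1) of the bound is slack. *)

From HB Require Import structures.
From mathcomp Require Import all_boot all_order all_algebra.
From mathcomp Require Import reals ring lra.
Import Order.TTheory GRing.Theory Num.Theory.
Set Implicit Arguments. Unset Strict Implicit. Unset Printing Implicit Defensive.
Local Open Scope ring_scope.

Section EuclideanNorm.
Variables (R : rcfType) (I : finType).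
Implicit Types a b : I -> R.

Definition l2norm a := Num.sqrt (\sum_i a i ^+ 2).

Lemma sumr_sqr_ge0 a : 0 <= \sum_i a i ^+ 2.
Proof. by apply: sumr_ge0 => i _; exact: sqr_ge0. Qed.

Lemma l2norm_ge0 a : 0 <= l2norm a.
Proof. exact: sqrtr_ge0. Qed.

Lemma eq_l2norm a b : a =1 b -> l2norm a = l2norm b.
Proof. by move=> eq_ab; rewrite /l2norm; congr Num.sqrt; apply: eq_bigr => i _; rewrite eq_ab. Qed.

Lemma sqr_l2norm a : l2norm a ^+ 2 = \sum_i a i ^+ 2.
Proof. by rewrite sqr_sqrtr // sumr_sqr_ge0. Qed.

(* Lagrange's identity: the defect in Cauchy-Schwarz is a sum of squares. *)
Lemma cauchy_schwarz_sqr a b :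
  (\sum_i a i * b i) ^+ 2 <= (\sum_i a i ^+ 2) * (\sum_i b i ^+ 2).
Proof.
have lagrange : \sum_i \sum_j (a i * b j - a j * b i) ^+ 2
    = 2 * ((\sum_i a i ^+ 2) * (\sum_j b j ^+ 2) - (\sum_i a i * b i) ^+ 2).
  have -> : \sum_i \sum_j (a i * b j - a j * b i) ^+ 2
      = \sum_i \sum_j a i ^+ 2 * b j ^+ 2 + \sum_i \sum_j a j ^+ 2 * b i ^+ 2
        - 2 * \sum_i \sum_j a i * b i * (a j * b j).
    rewrite mulr_sumr -big_split -sumrB; apply: eq_bigr => i _.
    rewrite mulr_sumr -big_split -sumrB; apply: eq_bigr => j _ /=; ring.
  rewrite [in X in _ + X - _]exchange_big /= -big_distrlr expr2 -big_distrlr /=.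
  ring.
have : 0 <= \sum_i \sum_j (a i * b j - a j * b i) ^+ 2.
  by apply: sumr_ge0 => i _; exact: sumr_sqr_ge0.
by rewrite lagrange pmulr_rge0 ?ltr0n // subr_ge0.
Qed.

Lemma cauchy_schwarz a b : \sum_i a i * b i <= l2norm a * l2norm b.
Proof.
rewrite -sqrtrM ?sumr_sqr_ge0 //; apply: le_trans (ler_norm _) _.
by rewrite -sqrtr_sqr ler_wsqrtr // cauchy_schwarz_sqr.
Qed.

Lemma l2normD a b : l2norm (fun i => a i + b i) <= l2norm a + l2norm b.
Proof.
rewrite -ler_sqr ?nnegrE ?addr_ge0 ?l2norm_ge0 // sqr_l2norm.
have -> : \sum_i (a i + b i) ^+ 2
    = \sum_i a i ^+ 2 + 2 * \sum_i a i * b i + \sum_i b i ^+ 2.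
  by rewrite mulr_sumr -!big_split; apply: eq_bigr => i _ /=; ring.
rewrite sqrrD -!sqr_l2norm lerD2r lerD2l -[X in _ <= X]mulr_natl.
by rewrite ler_wpM2l ?ler0n // cauchy_schwarz.
Qed.

Lemma l2normZ k a : l2norm (fun i => k * a i) = `|k| * l2norm a.
Proof.
rewrite /l2norm -sqrtr_sqr -sqrtrM ?sqr_ge0 // mulr_sumr.
by congr Num.sqrt; apply: eq_bigr => i _; rewrite exprMn.
Qed.

Lemma l2norm_eq0 a : l2norm a = 0 -> forall i, a i = 0.
Proof.
move=> /eqP; rewrite sqrtr_eq0 => a_le0 i.
have sum0 : \sum_i a i ^+ 2 = 0 by apply/eqP; rewrite eq_le a_le0 sumr_sqr_ge0.
by apply/eqP; rewrite -sqrf_eq0 (psumr_eq0P (fun i _ => sqr_ge0 (a i)) sum0).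
Qed.

Lemma ler_norm_l2norm a i : `|a i| <= l2norm a.
Proof.
rewrite -sqrtr_sqr ler_wsqrtr // (bigD1 i) //= lerDl.
by apply: sumr_ge0 => j _; exact: sqr_ge0.
Qed.

Lemma l2norm_le_sum a : (forall i, 0 <= a i) -> l2norm a <= \sum_i a i.
Proof.
move=> a_ge0; rewrite -ler_sqr ?nnegrE ?l2norm_ge0 ?sumr_ge0 // sqr_l2norm.
rewrite [X in _ <= X]expr2 big_distrl /=; apply: ler_sum => i _.
rewrite expr2 ler_wpM2l // (bigD1 i) //= lerDl.
by apply: sumr_ge0 => j _.
Qed.

End EuclideanNorm.

Section Frobenius.
Variable R : realType.

Lemma frobE m n (X : 'M[R]_(m, n)) : frob X = l2norm (fun q : 'I_m * 'I_n => X q.1 q.2).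
Proof. by rewrite /frob /l2norm pair_bigA. Qed.

Lemma frob_ge0 m n (X : 'M[R]_(m, n)) : 0 <= frob X.
Proof. exact: sqrtr_ge0. Qed.

Lemma frob0 m n : frob (0 : 'M[R]_(m, n)) = 0.
Proof.
by rewrite /frob big1 ?sqrtr0 // => i _; rewrite big1 // => j _; rewrite mxE expr0n.
Qed.

Lemma frob_eq0 m n (X : 'M[R]_(m, n)) : frob X = 0 -> X = 0.
Proof.
by rewrite frobE => /l2norm_eq0 X0; apply/matrixP => i j; rewrite mxE (X0 (i, j)).
Qed.

Lemma frobD m n (X Y : 'M[R]_(m, n)) : frob (X + Y) <= frob X + frob Y.
Proof.
rewrite !frobE (@eq_l2norm _ _ _ (fun q => X q.1 q.2 + Y q.1 q.2)) ?l2normD // => q.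
by rewrite mxE.
Qed.

Lemma frobZ m n (k : R) (X : 'M[R]_(m, n)) : frob (k *: X) = `|k| * frob X.
Proof.
by rewrite !frobE -l2normZ; apply: eq_l2norm => q; rewrite mxE.
Qed.

Lemma frobN m n (X : 'M[R]_(m, n)) : frob (- X) = frob X.
Proof. by rewrite -scaleN1r frobZ normrN normr1 mul1r. Qed.

Lemma frob_sum m n (I : Type) (r : seq I) (P : pred I) (F : I -> 'M[R]_(m, n)) :
  frob (\sum_(i <- r | P i) F i) <= \sum_(i <- r | P i) frob (F i).
Proof.
elim/big_rec2: _ => [|i y1 y2 _ IH]; first by rewrite frob0.
by apply: le_trans (frobD _ _) _; rewrite lerD2l.
Qed.

Lemma frobM m n k (X : 'M[R]_(m, n)) (Y : 'M[R]_(n, k)) :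
  frob (X *m Y) <= frob X * frob Y.
Proof.
rewrite /frob -sqrtrM; last by apply: sumr_ge0 => i _; exact: sumr_sqr_ge0.
rewrite ler_wsqrtr // big_distrl /=; apply: ler_sum => i _.
rewrite exchange_big mulr_sumr; apply: ler_sum => j _.
by rewrite mxE cauchy_schwarz_sqr.
Qed.

End Frobenius.

Section ParameterSpace.
Variables (R : realType) (p du dx : nat).
Local Notation P := (param R p du dx).
Implicit Types M N : P.

Definition coord M (q : 'I_p * 'I_du * 'I_dx) : R := M q.1.1 q.1.2 q.2.

Lemma pipE M N : pip M N = \sum_q coord M q * coord N q.
Proof. by rewrite /pip !pair_bigA. Qed.

Lemma pnormE M : pnorm M = l2norm (coord M).
Proof.
by rewrite /pnorm /l2norm pipE; congr Num.sqrt; apply: eq_bigr => q _; rewrite expr2.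
Qed.

Lemma pnorm_ge0 M : 0 <= pnorm M.
Proof. exact: sqrtr_ge0. Qed.

Lemma sqr_pnorm M : pnorm M ^+ 2 = pip M M.
Proof.
rewrite pnormE sqr_l2norm pipE.
by apply: eq_bigr => q _; rewrite expr2.
Qed.

Lemma pip_le_pnorm M N : pip M N <= pnorm M * pnorm N.
Proof. by rewrite pipE !pnormE cauchy_schwarz. Qed.

Lemma pipNr M N : pip M (- N) = - pip M N.
Proof.
rewrite !pipE -sumrN; apply: eq_bigr => q _.
by rewrite /coord !ffunE !mxE mulrN.
Qed.

Lemma pnormN M : pnorm (- M) = pnorm M.
Proof.
rewrite !pnormE /l2norm; congr Num.sqrt; apply: eq_bigr => q _.
by rewrite /coord !ffunE !mxE sqrrN.
Qed.

Lemma pnorm_distC M N : pnorm (M - N) = pnorm (N - M).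
Proof. by rewrite -pnormN opprB. Qed.

Lemma pnorm0 : pnorm (0 : P) = 0.
Proof.
rewrite pnormE /l2norm big1 ?sqrtr0 // => q _.
by rewrite /coord !ffunE !mxE expr0n.
Qed.

Lemma sqr_pnorm_combination (lam : R) (x y c : P) :
  pnorm (lam *: y + (1 - lam) *: x - c) ^+ 2
  = lam * pnorm (y - c) ^+ 2 + (1 - lam) * pnorm (x - c) ^+ 2
    - lam * (1 - lam) * pnorm (y - x) ^+ 2.
Proof.
rewrite !sqr_pnorm !pipE !mulr_sumr -big_split -sumrB /=.
by apply: eq_bigr => q _; rewrite /coord !ffunE !mxE; ring.
Qed.

Definition block_norm M : R := \sum_k frob (M k).

Lemma block_norm_ge0 M : 0 <= block_norm M.
Proof. by apply: sumr_ge0 => k _; exact: frob_ge0. Qed.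

Lemma pnorm_blocks M : pnorm M = l2norm (fun k => frob (M k)).
Proof.
rewrite /pnorm /l2norm /pip; congr Num.sqrt; apply: eq_bigr => k _.
rewrite sqr_sqrtr; last by apply: sumr_ge0 => i _; exact: sumr_sqr_ge0.
by apply: eq_bigr => i _; apply: eq_bigr => j _; rewrite expr2.
Qed.

Lemma pnorm_le_block_norm M : pnorm M <= block_norm M.
Proof. by rewrite pnorm_blocks l2norm_le_sum // => k; exact: frob_ge0. Qed.

Lemma block_norm_le_pnorm M : block_norm M <= p%:R * Num.sqrt du%:R * pnorm M.
Proof.
have [du0|du_gt0] := posnP du.
  rewrite /block_norm big1 ?mulr_ge0 ?ler0n ?sqrtr_ge0 ?pnorm_ge0 // => k _.
  by rewrite /frob big1 ?sqrtr0 // => -[i i_lt] _; exfalso; by rewrite du0 in i_lt.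
apply: (@le_trans _ _ (\sum_(k < p) pnorm M)).
  apply: ler_sum => k _; rewrite pnorm_blocks.
  by apply: le_trans (ler_norm_l2norm _ k); rewrite ger0_norm ?frob_ge0.
rewrite sumr_const card_ord -[X in X <= _]mulr_natl -mulrA ler_wpM2l ?ler0n //.
rewrite ler_peMl ?pnorm_ge0 //.
by rewrite -[X in X <= _]sqrtr1 ler_wsqrtr // ler1n.
Qed.

Lemma block_normB M N : block_norm (M - N) <= block_norm M + block_norm N.
Proof.
rewrite /block_norm -big_split; apply: ler_sum => k _; rewrite !ffunE.
by apply: le_trans (frobD _ _) _; rewrite frobN.
Qed.

Definition convex_set (K : P -> Prop) := forall (x y : P) (lam : R), 0 <= lam <= 1 ->
  K x -> K y -> K (lam *: y + (1 - lam) *: x).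

Lemma in_class_convex (kM : R) : convex_set (in_class kM).
Proof.
move=> x y lam /andP[lam_ge0 lam_le1] hx hy.
have lam'_ge0 : 0 <= 1 - lam by rewrite subr_ge0.
apply: (@le_trans _ _ (lam * block_norm y + (1 - lam) * block_norm x)); last first.
  by move: hx hy; rewrite /in_class -/(block_norm x) -/(block_norm y); nra.
rewrite /block_norm !mulr_sumr -big_split; apply: ler_sum => k _; rewrite !ffunE.
by apply: le_trans (frobD _ _) _; rewrite !frobZ !ger0_norm.
Qed.

Lemma in_class0 M : in_class 0 M -> M = 0.
Proof.
move=> hM; have M0 : block_norm M = 0 by apply/eqP; rewrite eq_le hM block_norm_ge0.
apply/ffunP => k; rewrite ffunE; apply: frob_eq0.
exact: (psumr_eq0P (fun k _ => frob_ge0 (M k)) M0).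
Qed.

End ParameterSpace.

Section StrongConvexity.
Variables (R : realType) (p du dx : nat).
Local Notation P := (param R p du dx).
Implicit Types (K : P -> Prop) (Phi Psi : P -> R).

Definition strongly_convex (S : R) Phi := forall (x y : P) (lam : R), 0 <= lam <= 1 ->
  Phi (lam *: y + (1 - lam) *: x)
    <= lam * Phi y + (1 - lam) * Phi x - lam * (1 - lam) * (S / 2) * pnorm (y - x) ^+ 2.

Lemma eq_strongly_convex S Phi Psi :
  Phi =1 Psi -> strongly_convex S Psi -> strongly_convex S Phi.
Proof. by move=> e h x y lam hlam; rewrite !e; exact: h. Qed.

Lemma strongly_convex0 : strongly_convex 0 (fun _ => 0).
Proof. by move=> x y lam _ /=; lra. Qed.

Lemma strongly_convexD S1 S2 Phi Psi : strongly_convex S1 Phi -> strongly_convex S2 Psi ->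
  strongly_convex (S1 + S2) (fun M => Phi M + Psi M).
Proof. by move=> h1 h2 x y lam hlam; move: (h1 x y lam hlam) (h2 x y lam hlam); lra. Qed.

Lemma strongly_convex_sqr_dist (s : R) (c : P) :
  strongly_convex s (fun M => s / 2 * pnorm (M - c) ^+ 2).
Proof. by move=> x y lam _; rewrite sqr_pnorm_combination; lra. Qed.

Lemma strongly_convex_argmin_growth K S Phi (x y : P) :
  convex_set K -> strongly_convex S Phi -> 0 <= S ->
  K x -> (forall z, K z -> Phi x <= Phi z) -> K y ->
  Phi x + S / 2 * pnorm (y - x) ^+ 2 <= Phi y.
Proof.
move=> hK hPhi S_ge0 Kx xmin Ky.
set a := S / 2 * _; set b := Phi y - Phi x.
have shrink lam : 0 < lam <= 1 -> (1 - lam) * a <= b.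
  move=> /andP[lam_gt0 lam_le1]; have hlam : 0 <= lam <= 1 by rewrite ltW.
  have := xmin _ (hK x y lam hlam Kx Ky); have := hPhi x y lam hlam.
  have -> : lam * (1 - lam) * (S / 2) * pnorm (y - x) ^+ 2 = lam * ((1 - lam) * a).
    by rewrite /a; ring.
  move=> h1 h2; rewrite -(ler_pM2l lam_gt0) /b; lra.
rewrite -lerBrDl -/b leNgt; apply/negP => b_lt_a.
have b_ge0 : 0 <= b by rewrite subr_ge0 xmin.
have a_gt0 : 0 < a by apply: le_lt_trans b_lt_a.
(* with lam = (a - b) / (2 a), (1 - lam) a = (a + b) / 2 lies strictly above b *)
have := shrink ((a - b) / (2 * a)).
have -> : (1 - (a - b) / (2 * a)) * a = (a + b) / 2 by field; rewrite gt_eqF.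
have lam_ok : 0 < (a - b) / (2 * a) <= 1.
  have two_a_gt0 : 0 < 2 * a by rewrite mulr_gt0.
  by rewrite divr_gt0 ?subr_gt0 //= ler_pdivrMr // mul1r; lra.
by move/(_ lam_ok); lra.
Qed.

Lemma strongly_convex_argmin_stable K S (phi f : P -> R) (x y g : P) :
  convex_set K -> 0 < S ->
  strongly_convex S phi -> strongly_convex S (fun M => phi M + f M) ->
  K x -> K y -> (forall z, K z -> phi x <= phi z) ->
  (forall z, K z -> phi y + f y <= phi z + f z) ->
  f x + pip g (y - x) <= f y ->
  phi x + f x - (phi y + f y) <= pnorm g ^+ 2 / (2 * S) /\ pnorm (x - y) <= pnorm g / S.
Proof.
move=> hK S_gt0 hphi hF Kx Ky xmin ymin subg.
have growth_x := strongly_convex_argmin_growth hK hphi (ltW S_gt0) Kx xmin Ky.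
have growth_y := strongly_convex_argmin_growth hK hF (ltW S_gt0) Ky ymin Kx.
have cs : - pip g (y - x) <= pnorm g * pnorm (x - y).
  by rewrite -opprB pipNr opprK pip_le_pnorm.
rewrite pnorm_distC in growth_x.
have a_ge0 := pnorm_ge0 g; have r_ge0 := pnorm_ge0 (x - y).
set a := pnorm g in a_ge0 cs *.
set r := pnorm (x - y) in r_ge0 cs growth_x growth_y *.
have gap : phi x + f x - (phi y + f y) <= a * r - S / 2 * r ^+ 2 by lra.
have Sr : S * r ^+ 2 <= a * r by lra.
split.
  apply: le_trans gap _; rewrite ler_pdivlMr ?mulr_gt0 //.
  by have := sqr_ge0 (S * r - a); nra.
rewrite ler_pdivlMr // mulrC.
have [->|r_neq0] := eqVneq r 0; first by rewrite mulr0.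
have r_gt0 : 0 < r by rewrite lt_def r_neq0.
by rewrite expr2 mulrA ler_pM2r in Sr.
Qed.

End StrongConvexity.

Section AdaptiveSums.
Variable R : realType.
Implicit Types a : nat -> R.

Lemma first_le_sum_nat a T : (forall t, 0 <= a t) -> (1 <= T)%N ->
  a 1%N <= \sum_(1 <= t < T.+1) a t.
Proof.
by move=> a_ge0 T_ge1; rewrite big_ltn // lerDl; apply: sumr_ge0 => t _.
Qed.

(* With S_t = a_1 + ... + a_t, each term a_t / sqrt S_t is at most 2 (sqrt S_t - sqrt S_(t-1)). *)
Lemma sum_div_sqrt_partial_le a T : (forall t, 0 <= a t) -> 0 < a 1%N ->
  \sum_(1 <= t < T.+1) a t / Num.sqrt (\sum_(1 <= s < t.+1) a s)
    <= 2 * Num.sqrt (\sum_(1 <= t < T.+1) a t).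
Proof.
move=> a_ge0 a1_gt0; elim: T => [|T IH]; first by rewrite !big_geq // sqrtr0 mulr0.
rewrite big_nat_recr //= (big_nat_recr T.+1) //=.
set s := \sum_(1 <= t < T.+1) a t in IH *.
have s_ge0 : 0 <= s by apply: sumr_ge0 => t _.
have sa_gt0 : 0 < s + a T.+1.
  by apply: lt_le_trans a1_gt0 _; rewrite -big_nat_recr // first_le_sum_nat.
suff : a T.+1 / Num.sqrt (s + a T.+1)
    <= 2 * (Num.sqrt (s + a T.+1) - Num.sqrt s) by lra.
have e : a T.+1 = Num.sqrt (s + a T.+1) ^+ 2 - Num.sqrt s ^+ 2.
  by rewrite !sqr_sqrtr ?(ltW sa_gt0) // addrC addKr.
rewrite ler_pdivrMr ?sqrtr_gt0 //.
move: e (sqr_ge0 (Num.sqrt (s + a T.+1) - Num.sqrt s)).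
move: (Num.sqrt (s + a T.+1)) (Num.sqrt s) => u v; rewrite !expr2; lra.
Qed.

End AdaptiveSums.

Section GradientScales.
Variables (R : realType) (p du dx : nat) (G : nat -> param R p du dx) (sigma : R).

Lemma pnorm_le_gg t : pnorm (G t) <= gg G t.
Proof. by rewrite /gg le_max lexx. Qed.

Lemma sqr_pnorm_le_gg t : pnorm (G t) ^+ 2 <= gg G t.
Proof. by rewrite /gg le_max lexx orbT. Qed.

Lemma hh_ge0 t : 0 <= hh G t.
Proof.
rewrite /hh; elim/big_ind: _ => //; last by move=> s _; rewrite le_max pnorm_ge0.
by move=> u v u_ge0 _; rewrite le_max u_ge0.
Qed.

Lemma gg_le_hh t : (1 <= t)%N -> gg G t <= hh G t.
Proof.
by move=> t_ge1; rewrite /hh (le_bigmax_seq _ t) // mem_index_iota t_ge1 ltnSn.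
Qed.

Lemma hsum_gt0 t : 0 < hh G 1 -> (1 <= t)%N -> 0 < hsum G t.
Proof. by move=> h1_gt0 t_ge1; apply: lt_le_trans h1_gt0 (first_le_sum_nat hh_ge0 t_ge1). Qed.

Lemma sum_hh_div_sqrt_hsum_le (k : R) T : 0 < hh G 1 -> 0 < k ->
  \sum_(1 <= t < T.+1) hh G t / (k * Num.sqrt (hsum G t)) <= 2 * Num.sqrt (hsum G T) / k.
Proof.
move=> h1_gt0 k_gt0.
have -> : \sum_(1 <= t < T.+1) hh G t / (k * Num.sqrt (hsum G t))
    = (\sum_(1 <= t < T.+1) hh G t / Num.sqrt (hsum G t)) / k.
  by rewrite mulr_suml; apply: eq_bigr => t _; rewrite invfM; ring.
apply: ler_wpM2r; first by rewrite invr_ge0 ltW.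
exact: sum_div_sqrt_partial_le _ hh_ge0 h1_gt0.
Qed.

Lemma sig_sqrt_hsumS t :
  sigma * Num.sqrt (hsum G t.+1) = sigma * Num.sqrt (hsum G t) + sig sigma G t.+1.
Proof.
rewrite /sig; case: eqP => [[->]|_]; last by ring.
by rewrite /hsum big_nat1 big_geq // sqrtr0 mulr0 add0r.
Qed.

Lemma sum_sig t : \sum_(1 <= s < t.+1) sig sigma G s = sigma * Num.sqrt (hsum G t).
Proof.
elim: t => [|t IH]; first by rewrite big_geq // /hsum big_geq // sqrtr0 mulr0.
by rewrite big_nat_recr //= IH sig_sqrt_hsumS.
Qed.

Lemma sig_ge0 t : 0 <= sigma -> (1 <= t)%N -> 0 <= sig sigma G t.
Proof.
move=> sigma_ge0; case: t => // t _.
have := sig_sqrt_hsumS t; have : sigma * Num.sqrt (hsum G t) <= sigma * Num.sqrt (hsum G t.+1).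
  by rewrite ler_wpM2l // ler_wsqrtr // /hsum (big_nat_recr t.+1) //= lerDl hh_ge0.
lra.
Qed.

End GradientScales.

Section FTRL.
Variables (R : realType) (p du dx : nat).
Local Notation P := (param R p du dx).
Variables (f : nat -> P -> R) (sigma : R) (G Ms : nat -> P).
Local Notation F := (ftrl_obj f sigma G Ms).
Local Notation reg t M := (sig sigma G t / 2 * pnorm (M - Ms t) ^+ 2).

Lemma ftrl_obj0 M : F 0 M = 0.
Proof. by rewrite /ftrl_obj big_geq. Qed.

Lemma ftrl_objS t M : F t.+1 M = F t M + (f t.+1 M + reg t.+1 M).
Proof. by rewrite /ftrl_obj big_nat_recr. Qed.

Lemma ftrl_obj_telescope T : \sum_(1 <= t < T.+1) f t (Ms t)
  = \sum_(1 <= t < T.+1) (F t (Ms t) - F t (Ms t.+1)) + F T (Ms T.+1).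
Proof.
elim: T => [|T IH]; first by rewrite !big_geq // ftrl_obj0 addr0.
rewrite big_nat_recr //= IH [in RHS]big_nat_recr //= ftrl_objS.
by rewrite subrr pnorm0 expr0n mulr0 addr0; lra.
Qed.

Hypothesis f_convex : forall t, strongly_convex 0 (f t).
Hypothesis sigma_gt0 : 0 < sigma.

Lemma ftrl_obj_strongly_convex t : strongly_convex (sigma * Num.sqrt (hsum G t)) (F t).
Proof.
elim: t => [|t IH].
  rewrite /hsum big_geq // sqrtr0 mulr0.
  by apply: (eq_strongly_convex (Psi := fun _ => 0) ftrl_obj0); exact: strongly_convex0.
rewrite sig_sqrt_hsumS -[sig _ _ _]add0r.
apply: (eq_strongly_convex (Psi := fun M => F t M + (f t.+1 M + reg t.+1 M)) (ftrl_objS t)).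
by apply: strongly_convexD => //; apply: strongly_convexD => //; exact: strongly_convex_sqr_dist.
Qed.

Variable K : P -> Prop.
Hypothesis K_convex : convex_set K.
Hypothesis h1_gt0 : 0 < hh G 1.
Hypothesis K_Ms : forall t, (1 <= t)%N -> K (Ms t).
Hypothesis Ms_argmin : forall t M, K M -> F t (Ms t.+1) <= F t M.
Hypothesis G_subgrad : forall t, (1 <= t)%N -> subgrad (f t) (Ms t) (G t).

(* M_(t+1) minimises F_t = phi + f_t, where phi = F_(t-1) + r_t is minimised by M_t
   because r_t vanishes there. *)
Lemma ftrl_stability t : (1 <= t)%N ->
  F t (Ms t) - F t (Ms t.+1) <= pnorm (G t) ^+ 2 / (2 * (sigma * Num.sqrt (hsum G t)))
  /\ pnorm (Ms t - Ms t.+1) <= pnorm (G t) / (sigma * Num.sqrt (hsum G t)).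
Proof.
case: t => // t _.
pose phi M := F t M + reg t.+1 M.
have F_split M : F t.+1 M = phi M + f t.+1 M by rewrite ftrl_objS /phi; ring.
have S_gt0 : 0 < sigma * Num.sqrt (hsum G t.+1) by rewrite mulr_gt0 ?sqrtr_gt0 ?hsum_gt0.
have phi_sc : strongly_convex (sigma * Num.sqrt (hsum G t.+1)) phi.
  by rewrite sig_sqrt_hsumS; apply: strongly_convexD;
    [exact: ftrl_obj_strongly_convex | exact: strongly_convex_sqr_dist].
have F_sc : strongly_convex (sigma * Num.sqrt (hsum G t.+1)) (fun M => phi M + f t.+1 M).
  exact: eq_strongly_convex (ftrl_obj_strongly_convex t.+1).
have phi_min z : K z -> phi (Ms t.+1) <= phi z.
  move=> Kz; rewrite /phi subrr pnorm0 expr0n mulr0 addr0.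
  apply: le_trans (Ms_argmin t Kz) _; rewrite lerDl mulr_ge0 ?sqr_ge0 //.
  by rewrite divr_ge0 ?sig_ge0 ?ltW.
have F_min z : K z -> phi (Ms t.+2) + f t.+1 (Ms t.+2) <= phi z + f t.+1 z.
  by move=> Kz; rewrite -!F_split; exact: Ms_argmin.
rewrite !F_split.
exact: (strongly_convex_argmin_stable K_convex S_gt0 phi_sc F_sc
  (K_Ms (t := t.+1) isT) (K_Ms (t := t.+2) isT) phi_min F_min (G_subgrad (t := t.+1) isT _)).
Qed.

Lemma ftrl_movement T :
  \sum_(1 <= t < T.+1) pnorm (Ms t - Ms t.+1) <= 2 * Num.sqrt (hsum G T) / sigma.
Proof.
apply: le_trans _ (sum_hh_div_sqrt_hsum_le T h1_gt0 sigma_gt0).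
apply: ler_sum_nat => t /andP[t_ge1 _]; apply: le_trans (ftrl_stability t_ge1).2 _.
apply: ler_wpM2r; first by rewrite invr_ge0 mulr_ge0 ?sqrtr_ge0 ?ltW.
exact: le_trans (pnorm_le_gg _ _) (gg_le_hh _ t_ge1).
Qed.

Lemma ftrl_regret T (M : P) (D : R) : K M ->
  (forall t, (1 <= t <= T)%N -> pnorm (M - Ms t) <= D) ->
  \sum_(1 <= t < T.+1) f t (Ms t) - \sum_(1 <= t < T.+1) f t M
    <= (sigma^-1 + D ^+ 2 / 2 * sigma) * Num.sqrt (hsum G T).
Proof.
move=> KM M_near.
have two_sigma_gt0 : 0 < 2 * sigma by rewrite mulr_gt0.
have stability : \sum_(1 <= t < T.+1) (F t (Ms t) - F t (Ms t.+1))
    <= Num.sqrt (hsum G T) / sigma.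
  apply: le_trans (le_trans _ (sum_hh_div_sqrt_hsum_le T h1_gt0 two_sigma_gt0)) _.
    apply: ler_sum_nat => t /andP[t_ge1 _].
    apply: le_trans (ftrl_stability t_ge1).1 _; rewrite mulrA.
    apply: ler_wpM2r; first by rewrite invr_ge0 mulr_ge0 ?sqrtr_ge0 ?ltW.
    exact: le_trans (sqr_pnorm_le_gg _ _) (gg_le_hh _ t_ge1).
  by rewrite invfM mulrACA mulfV ?pnatr_eq0 // mul1r.
have regularizer :
    F T M <= \sum_(1 <= t < T.+1) f t M + D ^+ 2 / 2 * (sigma * Num.sqrt (hsum G T)).
  rewrite /ftrl_obj big_split /= lerD2l -sum_sig mulr_sumr.
  apply: ler_sum_nat => t t_range.
  have : pnorm (M - Ms t) ^+ 2 <= D ^+ 2.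
    by have := M_near t t_range; have := pnorm_ge0 (M - Ms t); nra.
  have := sig_ge0 G (ltW sigma_gt0) (proj1 (andP t_range)); nra.
have := Ms_argmin T KM; rewrite ftrl_obj_telescope; lra.
Qed.

End FTRL.

Section ContractingRecursion.
Variable R : realType.

Lemma sum_contracting_le (e b : nat -> R) (delta : R) T :
  0 < delta <= 1 -> (forall t, 0 <= e t) -> e 1%N = 0 ->
  (forall t, (1 <= t)%N -> e t.+1 <= (1 - delta) * e t + b t) ->
  \sum_(1 <= t < T.+1) e t <= (\sum_(1 <= t < T) b t) / delta.
Proof.
move=> /andP[delta_gt0 delta_le1] e_ge0 e1 e_rec.
have inv n : delta * \sum_(1 <= t < n.+2) e t + (1 - delta) * e n.+1
    <= \sum_(1 <= t < n.+1) b t.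
  elim: n => [|n IH]; first by rewrite big_nat1 big_geq // e1; lra.
  rewrite [in X in X <= _]big_nat_recr //= [in X in _ <= X]big_nat_recr //=.
  by have := e_rec n.+1 isT; lra.
case: T => [|T]; first by rewrite !big_geq // mul0r.
rewrite ler_pdivlMr // mulrC.
have : 0 <= (1 - delta) * e T.+1 by rewrite mulr_ge0 ?subr_ge0.
by have := inv T; lra.
Qed.

End ContractingRecursion.

Section Dynamics.
Variables (R : realType) (dx du p : nat).
Variables (A : 'M[R]_dx) (B : 'M[R]_(dx, du)) (w : nat -> 'cV[R]_dx).
Local Notation P := (param R p du dx).
Local Notation state := (state A B w).
Local Notation xst := (xst A B w).

Lemma stateB (u u' : nat -> 'cV[R]_du) n :
  state u n.+1 - state u' n.+1 = A *m (state u n - state u' n) + B *m (u n.+1 - u' n.+1).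
Proof. by rewrite /= !mulmxBr opprD addrACA subrr addr0 opprD addrACA. Qed.

Lemma eq_state (u u' : nat -> 'cV[R]_du) :
  (forall s, (1 <= s)%N -> u s = u' s) -> forall n, state u n = state u' n.
Proof. by move=> eq_u; elim=> //= n ->; rewrite eq_u. Qed.

Lemma state_affine (a b : R) (u u1 u2 : nat -> 'cV[R]_du) : a + b = 1 ->
  (forall s, (1 <= s)%N -> u s = a *: u1 s + b *: u2 s) ->
  forall n, state u n = a *: state u1 n + b *: state u2 n.
Proof.
move=> ab1 u_comb; elim=> [|n IH] /=; first by rewrite !scaler0 addr0.
rewrite IH u_comb // !mulmxDr -!scalemxAr !scalerDr -{1}[w n.+1]scale1r -ab1 scalerDl.
by rewrite (addrACA (a *: (A *m state u1 n))) (addrACA (a *: (A *m state u1 n) + _)).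
Qed.

Lemma dac_comb (a b : R) (M N : P) t :
  dac (a *: M + b *: N) w t = a *: dac M w t + b *: dac N w t.
Proof.
rewrite /dac !scaler_sumr -big_split; apply: eq_bigr => k _ /=.
by rewrite !ffunE mulmxDl -!scalemxAl.
Qed.

Lemma dacB (M N : P) t : dac (M - N) w t = dac M w t - dac N w t.
Proof. by rewrite /dac -sumrB; apply: eq_bigr => k _; rewrite !ffunE mulmxBl. Qed.

Lemma fcost_convex (c : nat -> 'cV[R]_dx -> 'cV[R]_du -> R) t :
  convex_cost (c t) -> strongly_convex 0 (fcost A B w c t : P -> R).
Proof.
move=> c_convex x y lam lam01; rewrite /fcost /xst dac_comb.
rewrite (@state_affine lam (1 - lam) _ (dac y w) (dac x w)) ?subrKC //; last first.
  by move=> s _; exact: dac_comb.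
by rewrite mul0r mulr0 mul0r subr0; exact: c_convex.
Qed.

Lemma acost_const (c : nat -> 'cV[R]_dx -> 'cV[R]_du -> R) (Ms : nat -> P) (M : P) t :
  (forall s, (1 <= s)%N -> Ms s = M) -> (1 <= t)%N ->
  acost A B w c Ms t = fcost A B w c t M.
Proof.
move=> Ms_M t_ge1; rewrite /acost /fcost Ms_M // /xst.
by rewrite (@eq_state _ (dac M w)) // => s s_ge1; rewrite Ms_M.
Qed.

Variables (delta kB wb : R).
Hypothesis A_contracts : forall x : 'cV[R]_dx, frob (A *m x) <= (1 - delta) * frob x.
Hypothesis B_le : frob B <= kB.
Hypothesis w_le : forall t, frob (w t) <= wb.
Hypothesis delta_gt0 : 0 < delta.
Hypothesis delta_le1 : delta <= 1.

Local Notation z := (p%:R * wb * Num.sqrt du%:R * kB).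

Lemma gain_ge0 : 0 <= z.
Proof.
have wb_ge0 := le_trans (frob_ge0 (w 0%N)) (w_le 0%N).
have kB_ge0 := le_trans (frob_ge0 B) B_le.
by rewrite !mulr_ge0 ?ler0n ?sqrtr_ge0.
Qed.

Lemma state_input_stable (u u' : nat -> 'cV[R]_du) (b : R) :
  (forall s, (1 <= s)%N -> frob (u s - u' s) <= b) ->
  forall n, frob (state u n - state u' n) <= kB * b / delta.
Proof.
move=> u_near; have kB_ge0 : 0 <= kB := le_trans (frob_ge0 B) B_le.
have b_ge0 : 0 <= b := le_trans (frob_ge0 _) (u_near 1%N isT).
have fixpoint : (1 - delta) * (kB * b / delta) + kB * b = kB * b / delta.
  by field; rewrite gt_eqF.
elim=> [|n IH]; first by rewrite /= subrr frob0; apply: divr_ge0 (mulr_ge0 _ _) (ltW _).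
rewrite stateB; apply: le_trans (frobD _ _) _; rewrite -[X in _ <= X]fixpoint.
apply: lerD; first by apply: le_trans (A_contracts _) (ler_wpM2l _ IH); rewrite subr_ge0.
exact: le_trans (frobM _ _) (ler_pM (frob_ge0 _) (frob_ge0 _) B_le (u_near n.+1 isT)).
Qed.

Lemma frob_dac_le (M : P) s : frob (dac M w s) <= wb * block_norm M.
Proof.
rewrite /dac /block_norm mulr_sumr; apply: le_trans (frob_sum _ _ _) _.
apply: ler_sum => k _; apply: le_trans (frobM _ _) _.
by rewrite mulrC ler_wpM2r ?frob_ge0.
Qed.

Lemma xst_dac_lipschitz (M N : P) t :
  frob (xst (dac M w) t - xst (dac N w) t) <= z / delta * pnorm (M - N).
Proof.
have -> : z / delta * pnorm (M - N)
    = kB * (wb * (p%:R * Num.sqrt du%:R * pnorm (M - N))) / delta by ring.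
apply: state_input_stable => s _; rewrite -dacB.
apply: le_trans (frob_dac_le _ _) _.
by rewrite ler_wpM2l ?block_norm_le_pnorm // (le_trans (frob_ge0 (w 0%N))).
Qed.

Definition tracking_error (Ms : nat -> P) t :=
  frob (xst (fun s => dac (Ms s) w s) t - xst (dac (Ms t) w) t).

Lemma tracking_error_ge0 Ms t : 0 <= tracking_error Ms t.
Proof. exact: frob_ge0. Qed.

Lemma tracking_error1 Ms : tracking_error Ms 1 = 0.
Proof. by rewrite /tracking_error /xst /= subrr frob0. Qed.

(* The actual input at time t is the one of M_t, so the gap to x_(t+1)(M_t) only contracts. *)
Lemma tracking_error_rec Ms t : (1 <= t)%N ->
  tracking_error Ms t.+1
    <= (1 - delta) * tracking_error Ms t + z / delta * pnorm (Ms t - Ms t.+1).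
Proof.
case: t => // t _; rewrite /tracking_error.
set x := xst _ t.+2; set x' := xst (dac (Ms t.+1) w) t.+2.
have -> : x - xst (dac (Ms t.+2) w) t.+2 = (x - x') + (x' - xst (dac (Ms t.+2) w) t.+2).
  by rewrite addrA subrK.
apply: le_trans (frobD _ _) _; apply: lerD; last exact: xst_dac_lipschitz.
by rewrite /x /x' /xst /= stateB subrr mulmx0 addr0 A_contracts.
Qed.

Lemma acost_sub_fcost_le (c : nat -> 'cV[R]_dx -> 'cV[R]_du -> R) (l : R) (Ms : nat -> P) t :
  lipschitz_cost l (c t) ->
  acost A B w c Ms t - fcost A B w c t (Ms t) <= l * tracking_error Ms t.
Proof.
move=> c_lip; apply: le_trans (ler_norm _) _; apply: le_trans (c_lip _ _ _ _) _.
by rewrite subrr frob0 expr0n addr0 sqrtr_sqr ger0_norm ?frob_ge0.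
Qed.

Lemma sum_acost_sub_fcost_le (c : nat -> 'cV[R]_dx -> 'cV[R]_du -> R) (l : R) (Ms : nat -> P) T :
  0 <= l -> (forall t, lipschitz_cost l (c t)) ->
  \sum_(1 <= t < T.+1) (acost A B w c Ms t - fcost A B w c t (Ms t))
    <= l * z / delta ^+ 2 * \sum_(1 <= t < T) pnorm (Ms t - Ms t.+1).
Proof.
move=> l_ge0 c_lip.
apply: le_trans (_ : \sum_(1 <= t < T.+1) l * tracking_error Ms t <= _).
  by apply: ler_sum_nat => t _; exact: acost_sub_fcost_le.
have delta01 : 0 < delta <= 1 by rewrite delta_gt0.
rewrite -mulr_sumr; apply: le_trans (ler_wpM2l l_ge0 (sum_contracting_le T delta01
  (tracking_error_ge0 Ms) (tracking_error1 Ms) (tracking_error_rec Ms))) _.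
rewrite -mulr_sumr expr2 invfM le_eqVlt; apply/orP; left; apply/eqP; ring.
Qed.

End Dynamics.

Lemma spectral_norm_dim_gt0 (R : realType) n (A : 'M[R]_n) (c : R) :
  spectral_norm_eq A c -> 0 < c -> (0 < n)%N.
Proof.
case=> _ c_least c_gt0; rewrite lt0n; apply/negP => /eqP n0.
have /c_least : forall x : 'cV[R]_n, frob (A *m x) <= 0 * frob x.
  by move=> x; rewrite mul0r /frob big1 ?sqrtr0 // => -[i i_lt] _; exfalso; rewrite n0 in i_lt.
by rewrite leNgt c_gt0.
Qed.

Lemma lipschitz_cost_ge0 (R : realType) dx du (l : R) (ct : 'cV[R]_dx -> 'cV[R]_du -> R) :
  (0 < dx)%N -> lipschitz_cost l ct -> 0 <= l.
Proof.
move=> dx_gt0 ct_lip; pose x : 'cV[R]_dx := const_mx 1.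
have x_gt0 : 0 < frob x.
  rewrite lt_def frob_ge0 andbT; apply/eqP => /frob_eq0/matrixP/(_ (Ordinal dx_gt0) ord0).
  by rewrite !mxE => /eqP; rewrite oner_eq0.
have := ct_lip x 0 0 0; rewrite !subr0 frob0 expr0n addr0 sqrtr_sqr (ger0_norm (frob_ge0 x)).
by move=> h; have := le_trans (normr_ge0 _) h; rewrite pmulr_lge0.
Qed.

Lemma sigma_tuning (R : realType) (delta kM l z sigma : R) : 0 < delta -> 0 < kM ->
  0 < delta ^+ 2 + 2 * l * z ->
  sigma = Num.sqrt (delta ^+ 2 + 2 * l * z) / (Num.sqrt 2 * kM * delta) ->
  (2 * l * z / delta ^+ 2 + 1) / sigma + 2 * kM ^+ 2 * sigma
    = 2 * kM / delta * Num.sqrt (2 * (delta ^+ 2 + 2 * l * z)).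
Proof.
move=> delta_gt0 kM_gt0 q_gt0 ->; rewrite sqrtrM ?ler0n //.
have r_gt0 : 0 < Num.sqrt (2 : R) by rewrite sqrtr_gt0 ltr0n.
have s_gt0 : 0 < Num.sqrt (delta ^+ 2 + 2 * l * z) by rewrite sqrtr_gt0.
have r2 : Num.sqrt (2 : R) ^+ 2 = 2 by rewrite sqr_sqrtr ?ler0n.
have s2 := sqr_sqrtr (ltW q_gt0).
move: r_gt0 s_gt0 r2 s2; set r := Num.sqrt 2; set s := Num.sqrt _ => r_gt0 s_gt0 r2 s2.
have -> : 2 * l * z = s ^+ 2 - delta ^+ 2 by rewrite s2 addrC addKr.
rewrite -[X in X * kM ^+ 2]r2; field.
by rewrite !gt_eqF.
Qed.

Section FtrlController.
Variables (R : realType) (dx du p : nat).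
Local Notation P := (param R p du dx).
Variables (A : 'M[R]_dx) (B : 'M[R]_(dx, du)) (w : nat -> 'cV[R]_dx).
Variables (c : nat -> 'cV[R]_dx -> 'cV[R]_du -> R) (Ms G : nat -> P).
Variables (delta kB kM l wb sigma : R).
Local Notation f := (fcost A B w c : nat -> P -> R).
Local Notation z := (p%:R * wb * Num.sqrt du%:R * kB).

Hypothesis M1_class : in_class kM (Ms 1%N).
Hypothesis Ms_next : forall t, (1 <= t)%N ->
  in_class kM (Ms t.+1) /\
  forall M, in_class kM M -> ftrl_obj f sigma G Ms t (Ms t.+1) <= ftrl_obj f sigma G Ms t M.

Lemma ftrl_class t : (1 <= t)%N -> in_class kM (Ms t).
Proof. by case: t => // -[|t] _ //; exact: (Ms_next (t := t.+1) isT).1. Qed.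

Lemma ftrl_argmin t M : in_class kM M ->
  ftrl_obj f sigma G Ms t (Ms t.+1) <= ftrl_obj f sigma G Ms t M.
Proof. by case: t => [|t] KM; [rewrite !ftrl_obj0 | exact: (Ms_next (t := t.+1) isT).2]. Qed.

Hypothesis delta_gt0 : 0 < delta.
Hypothesis delta_le1 : delta <= 1.
Hypothesis A_contracts : forall x : 'cV[R]_dx, frob (A *m x) <= (1 - delta) * frob x.
Hypothesis B_le : frob B <= kB.
Hypothesis w_le : forall t, frob (w t) <= wb.
Hypothesis c_convex : forall t, convex_cost (c t).
Hypothesis c_lip : forall t, lipschitz_cost l (c t).
Hypothesis l_ge0 : 0 <= l.
Hypothesis sigma_gt0 : 0 < sigma.
Hypothesis h1_gt0 : 0 < hh G 1.
Hypothesis G_subgrad : forall t, (1 <= t)%N -> subgrad (f t) (Ms t) (G t).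

Lemma ftrl_controller_regret (Mstar : P) T : in_class kM Mstar -> (1 <= T)%N ->
  \sum_(1 <= t < T.+1) acost A B w c Ms t - \sum_(1 <= t < T.+1) f t Mstar
  <= ((2 * l * z / delta ^+ 2 + 1) / sigma + 2 * kM ^+ 2 * sigma) * Num.sqrt (hsum G T).
Proof.
move=> Mstar_class T_ge1.
have f_convex t : strongly_convex 0 (f t) := fcost_convex A B w (c_convex t).
have Mstar_near t : (1 <= t <= T)%N -> pnorm (Mstar - Ms t) <= 2 * kM.
  move=> /andP[t_ge1 _]; apply: le_trans (pnorm_le_block_norm _) _.
  apply: le_trans (block_normB _ _) _.
  by move: (ftrl_class t_ge1) Mstar_class; rewrite /in_class /block_norm; lra.
have regret := ftrl_regret f_convex sigma_gt0 (in_class_convex (kM := kM)) h1_gt0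
  ftrl_class ftrl_argmin G_subgrad Mstar_class Mstar_near.
have movement := ftrl_movement f_convex sigma_gt0 (in_class_convex (kM := kM)) h1_gt0
  ftrl_class ftrl_argmin G_subgrad T.
have mismatch := sum_acost_sub_fcost_le A_contracts B_le w_le delta_gt0 delta_le1 Ms T l_ge0 c_lip.
have lz_ge0 : 0 <= l * z / delta ^+ 2.
  exact: divr_ge0 (mulr_ge0 l_ge0 (gain_ge0 p B_le w_le)) (exprn_ge0 2 (ltW delta_gt0)).
have D_le : \sum_(1 <= t < T) pnorm (Ms t - Ms t.+1) <= 2 * Num.sqrt (hsum G T) / sigma.
  by apply: le_trans _ movement; rewrite [X in _ <= X]big_nat_recr //= lerDl pnorm_ge0.
have moved := ler_wpM2l lz_ge0 D_le.
have -> : \sum_(1 <= t < T.+1) acost A B w c Ms t - \sum_(1 <= t < T.+1) f t Mstar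
    = \sum_(1 <= t < T.+1) (acost A B w c Ms t - f t (Ms t))
      + (\sum_(1 <= t < T.+1) f t (Ms t) - \sum_(1 <= t < T.+1) f t Mstar).
  by rewrite sumrB; ring.
by move: mismatch moved regret; lra.
Qed.

End FtrlController.

Theorem theorem1 (R : realType) (dx du p : nat) (hp : (0 < p)%N)
  (A : 'M[R]_dx) (B : 'M[R]_(dx, du)) (delta kB kM l wb : R)
  (w : nat -> 'cV[R]_dx) (c : nat -> 'cV[R]_dx -> 'cV[R]_du -> R)
  (Ms G : nat -> param R p du dx) (Mstar : param R p du dx) (T : nat) :
  0 < delta < 1 ->
  spectral_norm_eq A (1 - delta) ->
  frob B <= kB ->
  w 0%N = 0 ->
  (forall t, frob (w t) <= wb) ->
  (forall t, convex_cost (c t)) ->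
  (forall t, lipschitz_cost l (c t)) ->
  let f := fcost A B w c in
  let z := p%:R * wb * Num.sqrt du%:R * kB in
  let sigma := Num.sqrt (delta ^+ 2 + 2 * l * z) / (Num.sqrt 2 * kM * delta) in
  (* subgradients G_t of f_t at M_t *)
  (forall t, (1 <= t)%N -> subgrad (f t) (Ms t) (G t)) ->
  (* FTRL-C iterates *)
  in_class kM (Ms 1%N) ->
  (forall t, (1 <= t)%N ->
     in_class kM (Ms t.+1) /\
     forall M, in_class kM M ->
       ftrl_obj f sigma G Ms t (Ms t.+1) <= ftrl_obj f sigma G Ms t M) ->
  0 < hh G 1 ->
  (* M_star is a minimizer of sum_{t=1}^T f_t over the class *)
  in_class kM Mstar ->
  (forall M, in_class kM M ->
     \sum_(1 <= t < T.+1) f t Mstar <= \sum_(1 <= t < T.+1) f t M) ->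
  (1 <= T)%N ->
  \sum_(1 <= t < T.+1) acost A B w c Ms t - \sum_(1 <= t < T.+1) f t Mstar
  <= 2 * kM / delta
     * (Num.sqrt (2 * (delta ^+ 2 + 2 * l * z)) + l * z / (delta * Num.sqrt (hh G 1)))
     * Num.sqrt (\sum_(1 <= t < T.+1) hh G t).
Proof.
move=> /andP[delta_gt0 delta_lt1] hA B_le _ w_le c_convex c_lip f z sigma
  G_subgrad M1_class Ms_next h1_gt0 Mstar_class _ T_ge1.
have [A_contracts _] := hA.
have Ms_class := ftrl_class M1_class Ms_next.
have [kM0|kM_neq0] := eqVneq kM 0.
  have Mstar0 : Mstar = 0 by apply: in_class0; rewrite -kM0.
  rewrite kM0 !mulr0 !mul0r subr_le0 le_eqVlt; apply/orP; left; apply/eqP.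
  apply: eq_big_nat => t /andP[t_ge1 _]; apply: acost_const => // s s_ge1.
  by rewrite Mstar0; apply: in_class0; rewrite -kM0; exact: Ms_class.
have kM_gt0 : 0 < kM by rewrite lt_def kM_neq0 (le_trans (block_norm_ge0 _) M1_class).
have l_ge0 : 0 <= l.
  by apply: lipschitz_cost_ge0 (c_lip 0%N); apply: spectral_norm_dim_gt0 hA _; lra.
have z_ge0 : 0 <= z := gain_ge0 p B_le w_le.
have q_gt0 : 0 < delta ^+ 2 + 2 * l * z.
  by have := mulr_ge0 (mulr_ge0 (ler0n _ 2) l_ge0) z_ge0; have := exprn_gt0 2 delta_gt0; lra.
have sigma_gt0 : 0 < sigma.
  by apply: divr_gt0; rewrite ?sqrtr_gt0 // !mulr_gt0 // sqrtr_gt0 ltr0n.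
apply: le_trans (ftrl_controller_regret M1_class Ms_next delta_gt0 (ltW delta_lt1) A_contracts
  B_le w_le c_convex c_lip l_ge0 sigma_gt0 h1_gt0 G_subgrad Mstar_class T_ge1) _.
rewrite (sigma_tuning delta_gt0 kM_gt0 q_gt0 (erefl sigma)) -/(hsum G T).
apply: (ler_wpM2r (sqrtr_ge0 _)); apply: ler_wpM2l; first by rewrite divr_ge0 ?mulr_ge0 ?ltW.
rewrite lerDl; exact: divr_ge0 (mulr_ge0 l_ge0 z_ge0) (mulr_ge0 (ltW delta_gt0) (sqrtr_ge0 _)).
Qed.
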